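(* Let $q$ be an odd prime power and $n\ge1$. Let $g(x)\in\mathbb{F}_{q^n}[x]$ be a polynomial such that $g(x)^q=-g(x)$ for every $x\in\mathbb{F}_{q^n}$, let $L(x)=\sum_i a_i x^{q^i}$ with all $a_i\in\mathbb{F}_q$ be a linearized polynomial over $\mathbb{F}_q$, and let $\beta\in\mathbb{F}_{q^n}$ satisfy $\beta^q=-\beta$. Then for every $\delta\in\mathbb{F}_{q^n}$, the polynomial $$f(x)=g(x^q+x+\delta)+\beta\,\mathrm{Tr}(x)+L(x)$$ permutes $\mathbb{F}_{q^n}$ if and only if $L(x)$ permutes $\mathbb{F}_{q^n}$.
   Context: $\mathrm{Tr}$ denotes the trace function from $\mathbb{F}_{q^n}$ to $\mathbb{F}_q$, $\mathrm{Tr}(x)=x+x^q+\cdots+x^{q^{n-1}}$. A polynomial permutes $\mathbb{F}_{q^n}$ if it induces a bijection of $\mathbb{F}_{q^n}$. *)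

From mathcomp Require Import all_boot all_order all_algebra all_field.
Set Implicit Arguments. Unset Strict Implicit. Unset Printing Implicit Defensive.
Import GRing.Theory.
Local Open Scope ring_scope.

Definition prime_power (q : nat) : Prop :=
  exists p k : nat, prime p /\ (0 < k)%N /\ q = (p ^ k)%N.

Definition trq (K : finFieldType) (q n : nat) (x : K) : K :=
  \sum_(i < n) x ^+ (q ^ i).

Definition linpoly (K : finFieldType) (q : nat) (a : seq K) (x : K) : K :=
  \sum_(i < size a) a`_i * x ^+ (q ^ i).

Definition permutes (K : finFieldType) (f : K -> K) : Prop := bijective f.

From mathcomp Require Import all_boot all_order all_algebra all_field.
From mathcomp Require Import ring.
Set Implicit Arguments.
Unset Strict Implicit.
Unset Printing Implicit Defensive.

Import GRing.Theory.
Local Open Scope ring_scope.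

(* The additive map psi x := x^q + x semiconjugates f to L: psi (f x) = L (psi x).
   Moreover g only sees psi x, and Tr vanishes on the kernel of psi because
   Tr(x^q) = Tr x and q is odd, so f x - f y = L (x - y) whenever psi x = psi y.
   Hence injectivity of L transfers to f.  Conversely, if f permutes, L maps the
   finite set psi(K) onto itself, hence injectively, which forces ker L to lie in
   ker psi, where f and L differ only by a constant. *)

Section SemiconjugatePermutation.

Variables (V : finZmodType) (psi L f : V -> V).
Hypotheses (psiB : {morph psi : x y / x - y}) (LB : {morph L : x y / x - y}).
Hypotheses (psiL : forall x, psi (L x) = L (psi x))
           (psif : forall x, psi (f x) = L (psi x))
           (f_fibre : forall x y, psi x = psi y -> f x - f y = L (x - y)).

Let psi0 : psi 0 = 0. Proof. by have := psiB 0 0; rewrite !subrr. Qed.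
Let L0 : L 0 = 0. Proof. by have := LB 0 0; rewrite !subrr. Qed.

Lemma bijective_semiconj : bijective L -> bijective f.
Proof.
move=> /bij_inj L_inj; apply: injF_bij => x y fxy.
have psi_xy : psi x = psi y by apply: L_inj; rewrite -!psif fxy.
by apply/eqP; rewrite -subr_eq0; apply/eqP/L_inj; rewrite -f_fibre // fxy subrr L0.
Qed.

Lemma bijective_semiconj_linear : bijective f -> bijective L.
Proof.
move=> f_bij; have [finv fK finvK] := f_bij.
pose S := [set psi x | x : V].
have S_sub : S \subset L @: S.
  apply/subsetP => _ /imsetP[x _ ->].
  by rewrite -(finvK x) psif; apply/imset_f/imset_f.
have L_injS : {in S &, injective L}.
  by apply/imset_injP; rewrite eqn_leq leq_imset_card subset_leq_card.
have kerL u : L u = 0 -> u = 0.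
  move=> Lu0; have psiu0 : psi u = psi 0.
    by apply: L_injS; rewrite ?imset_f // -psiL Lu0 psi0 L0.
  by apply: (bij_inj f_bij); apply/eqP; rewrite -subr_eq0 f_fibre // subr0 Lu0.
apply: injF_bij => x y Lxy; apply/eqP; rewrite -subr_eq0; apply/eqP/kerL.
by rewrite LB Lxy subrr.
Qed.

Lemma bijective_semiconjP : bijective f <-> bijective L.
Proof. by split; [apply: bijective_semiconj_linear | apply: bijective_semiconj]. Qed.

End SemiconjugatePermutation.

Section PcharNatPower.

Variables (R : comNzRingType) (e : nat).
Hypothesis e_pchar : [pchar R].-nat e.

Lemma expr0n_pchar : (0 : R) ^+ e = 0.
Proof. by have /andP[e_gt0 _] := e_pchar; rewrite expr0n eqn0Ngt e_gt0. Qed.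

Lemma exprBn_pchar (x y : R) : (x - y) ^+ e = x ^+ e - y ^+ e.
Proof. by rewrite exprDn_pchar // exprNn_pchar. Qed.

Lemma expr_sum_pchar (I : Type) (r : seq I) (P : pred I) (F : I -> R) :
  (\sum_(i <- r | P i) F i) ^+ e = \sum_(i <- r | P i) F i ^+ e.
Proof.
by apply: (big_morph (fun x => x ^+ e)); [move=> x y; apply: exprDn_pchar | apply: expr0n_pchar].
Qed.

End PcharNatPower.

Section Frobenius.

Variables (K : finFieldType) (q n : nat).
Hypothesis q_pchar : [pchar K].-nat q.

Let qX_pchar i : [pchar K].-nat (q ^ i)%N.
Proof. by rewrite pnatX q_pchar. Qed.

Lemma trqD (x y : K) : trq q n (x + y) = trq q n x + trq q n y.
Proof. by rewrite /trq -big_split; apply: eq_bigr => i _; rewrite exprDn_pchar. Qed.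

Lemma trqB (x y : K) : trq q n (x - y) = trq q n x - trq q n y.
Proof. by rewrite /trq -sumrB; apply: eq_bigr => i _; rewrite exprBn_pchar. Qed.

Lemma trq_frob (x : K) : trq q n (x ^+ q) = trq q n x ^+ q.
Proof.
by rewrite /trq expr_sum_pchar //; apply: eq_bigr => i _; rewrite -!exprM mulnC.
Qed.

Section FrobeniusPeriod.

Hypothesis frob_n_id : forall x : K, x ^+ (q ^ n) = x.

Lemma trq_frob_id (x : K) : trq q n x ^+ q = trq q n x.
Proof.
rewrite -trq_frob /trq; under eq_bigr do rewrite -exprM -expnS.
case: n frob_n_id => [|m] frob_id; first by rewrite !big_ord0.
by rewrite big_ord_recr big_ord_recl /= frob_id addrC.
Qed.

Lemma trq_eq0 (u : K) : (2%:R : K) != 0 -> u ^+ q = - u -> trq q n u = 0.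
Proof.
move=> two_neq0 uq.
have : trq q n u *+ 2 = 0.
  rewrite mulr2n -{1}trq_frob_id -trq_frob uq -trqD addNr /trq.
  by rewrite big1 // => i _; rewrite expr0n_pchar.
by move/eqP; rewrite -mulr_natr mulf_eq0 (negbTE two_neq0) orbF => /eqP.
Qed.

End FrobeniusPeriod.

Variable a : seq K.
Hypothesis a_fixed : forall i, (i < size a)%N -> a`_i ^+ q = a`_i.

Lemma linpolyD (x y : K) : linpoly q a (x + y) = linpoly q a x + linpoly q a y.
Proof. by rewrite /linpoly -big_split; apply: eq_bigr => i _; rewrite exprDn_pchar // mulrDr. Qed.

Lemma linpolyB (x y : K) : linpoly q a (x - y) = linpoly q a x - linpoly q a y.
Proof. by rewrite /linpoly -sumrB; apply: eq_bigr => i _; rewrite exprBn_pchar // mulrBr. Qed.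

Lemma linpoly_frob (x : K) : linpoly q a x ^+ q = linpoly q a (x ^+ q).
Proof.
rewrite /linpoly expr_sum_pchar //.
by apply: eq_bigr => i _; rewrite exprMn a_fixed // -!exprM mulnC.
Qed.

End Frobenius.

Lemma prime_power_card_pchar (K : finFieldType) (q n : nat) :
  prime_power q -> #|K| = (q ^ n)%N ->
  exists2 p, p \in [pchar K] & exists2 k, (0 < k)%N & q = (p ^ k)%N.
Proof.
move=> [p [k [p_pr [k_gt0 ->]]]] cardK; exists p; last by exists k.
by apply: (card_finPcharP (n := k * n)); rewrite // cardK expnM.
Qed.

Theorem mainTheorem7 (K : finFieldType) (q n : nat)
  (hq : prime_power q) (hodd : odd q) (hn : (0 < n)%N) (hK : #|K| = (q ^ n)%N)
  (g : {poly K}) (hg : forall x : K, g.[x] ^+ q = - g.[x])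
  (a : seq K) (ha : forall i, (i < size a)%N -> a`_i ^+ q = a`_i)
  (beta : K) (hbeta : beta ^+ q = - beta) (delta : K) :
  permutes (fun x : K => g.[x ^+ q + x + delta] + beta * trq q n x + linpoly q a x)
  <-> permutes (linpoly q a).
Proof.
have [p pK [k k_gt0 q_def]] := prime_power_card_pchar hq hK.
have q_pchar : [pchar K].-nat q.
  by rewrite q_def pnatX (eq_pnat _ (pcharf_eq pK)) pnat_id ?(pcharf_prime pK).
have two_neq0 : (2%:R : K) != 0.
  rewrite -(dvdn_pcharf pK) dvdn_prime2 ?(pcharf_prime pK) //.
  by apply/eqP => p2; move: hodd; rewrite q_def p2 -(prednK k_gt0) expnS oddM.
have frob_n_id (x : K) : x ^+ (q ^ n) = x by rewrite -hK expf_card.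
pose psi (x : K) := x ^+ q + x.
apply: (@bijective_semiconjP _ psi).
- by move=> x y; rewrite /psi exprBn_pchar // opprD addrACA.
- exact: linpolyB.
- by move=> x; rewrite /psi linpoly_frob // linpolyD.
- move=> x; rewrite /psi !exprDn_pchar // hg exprMn hbeta trq_frob_id //.
  by rewrite linpoly_frob // linpolyD //; ring.
- move=> x y psi_xy /=.
  have tr_xy : trq q n x = trq q n y.
    apply/eqP; rewrite -subr_eq0 -trqB //; apply/eqP/trq_eq0 => //.
    apply: (addIr (x - y)); rewrite addNr exprBn_pchar // addrACA -opprD.
    by apply/eqP; rewrite subr_eq0; apply/eqP.
  by rewrite -/(psi x) -/(psi y) psi_xy tr_xy linpolyB // opprD addrACA subrr add0r.
Qed.
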